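(* For every integer $k\ge1$ and every prime power $q$, $P(k,\mathbb{F}_q)=O(k,\mathbb{F}_q)$.
   Context: A sequence $(a_n)_{n\ge0}$ over $\mathbb{F}_q$ satisfies a linear recurrence of degree $k$ if there are $c_0,\dots,c_{k-1}\in\mathbb{F}_q$, with $c_0\neq0$ (standing assumption), such that $a_{n+k}=\sum_{i=0}^{k-1}c_ia_{n+i}$ for all $n\ge0$; such sequences are purely periodic and $\rho(\mathbf{a})$ is the least $m>0$ with $a_{n+m}=a_n$ for all $n\ge0$. $P(k,\mathbb{F}_q)$ is the set of all $\rho(\mathbf{a})$ for sequences $\mathbf{a}$ satisfying some linear recurrence of degree $k$ over $\mathbb{F}_q$. For nonzero $f(x)\in\mathbb{F}_q[x]$, write $f=x^rg$ with $r\ge0$, $\gcd(g,x)=1$, and let $\mathrm{ord}(f)$ be the least $n>0$ with $g\mid x^n-1$. $O(k,\mathbb{F}_q)=\{\mathrm{ord}(f): f\in\mathbb{F}_q[x],\ \deg f=k\}$. *)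

From HB Require Import structures.
From mathcomp Require Import all_boot all_order all_algebra all_field.
Set Implicit Arguments.
Unset Strict Implicit.
Unset Printing Implicit Defensive.
Import GRing.Theory.
Local Open Scope ring_scope.

Definition satisfies_rec (F : fieldType) (k : nat) (a : nat -> F) : Prop :=
  exists c : 'I_k -> F,
    (forall i : 'I_k, val i = 0%N -> c i != 0) /\
    forall n : nat, a (n + k)%N = \sum_(i < k) c i * a (n + i)%N.

Definition is_least_period (T : Type) (a : nat -> T) (m : nat) : Prop :=
  (0 < m)%N /\ (forall n, a (n + m)%N = a n) /\
  forall m' : nat, (0 < m')%N -> (forall n, a (n + m')%N = a n) -> (m <= m')%N.

Definition Pset (F : fieldType) (k : nat) (m : nat) : Prop :=
  exists a : nat -> F, satisfies_rec k a /\ is_least_period a m.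

Definition is_ord (F : fieldType) (f : {poly F}) (n : nat) : Prop :=
  f != 0 /\
  exists (r : nat) (g : {poly F}),
    f = 'X^r * g /\ coprimep g 'X /\
    (0 < n)%N /\ g %| 'X^n - 1 /\
    forall n' : nat, (0 < n')%N -> g %| 'X^n' - 1 -> (n <= n')%N.

Definition Oset (F : fieldType) (k : nat) (m : nat) : Prop :=
  exists f : {poly F}, size f = k.+1 /\ is_ord f m.

From HB Require Import structures.
From mathcomp Require Import all_boot all_order all_algebra all_field.
From mathcomp Require Import ring zify.
Set Implicit Arguments.
Unset Strict Implicit.
Unset Printing Implicit Defensive.
Import GRing.Theory.
Local Open Scope ring_scope.

(* A polynomial p acts on sequences as p(E), E the shift a_n |-> a_(n+1).
   A recurrence of degree k says that a monic h of degree k annihilates a, and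
   periodicity with period m says that X^m - 1 annihilates a.  Since the
   annihilators of a form an ideal, the least period of a recurrent sequence is
   ord(g) for g = gcd(h, X^m - 1), and X^(k+1-size g) g has degree k.
   Conversely, for f = X^r g with g coprime to X, the sequence
   n |-> (top coefficient of X^n mod g) has annihilator ideal exactly (g), so
   its least period is ord(g) = ord(f); it satisfies the degree-k recurrence
   given by g (X - 1)^r, whose constant coefficient is nonzero. *)

Section PolyAction.
Variable F : fieldType.
Implicit Types (p q : {poly F}) (a b : nat -> F).

Definition pact p a (n : nat) : F := \sum_(i < size p) p`_i * a (n + i)%N.

Definition annihilates p a := forall n, pact p a n = 0.

Lemma pact_widen N p a n : (size p <= N)%N ->
  pact p a n = \sum_(i < N) p`_i * a (n + i)%N.
Proof.
move=> hN; rewrite /pact (big_ord_widen N (fun i => p`_i * a (n + i)%N)) //.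
rewrite big_mkcond /=; apply: eq_bigr => i _; case: ifP => // /negbT.
by rewrite -leqNgt => h; rewrite nth_default // mul0r.
Qed.

Lemma pactD p q a n : pact (p + q) a n = pact p a n + pact q a n.
Proof.
set N := maxn (size p) (size q).
rewrite !(@pact_widen N) ?leq_maxl ?leq_maxr ?size_polyD // -big_split /=.
by apply: eq_bigr => i _; rewrite coefD mulrDl.
Qed.

Lemma pactZ c p a n : pact (c *: p) a n = c * pact p a n.
Proof.
rewrite !(@pact_widen (size p)) ?size_scale_leq // mulr_sumr.
by apply: eq_bigr => i _; rewrite coefZ mulrA.
Qed.

Lemma pactB p q a n : pact (p - q) a n = pact p a n - pact q a n.
Proof. by rewrite pactD -scaleN1r pactZ mulN1r. Qed.

Lemma pact0 a n : pact 0 a n = 0.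
Proof. by rewrite /pact size_poly0 big_ord0. Qed.

Lemma pact_sum k (G : 'I_k -> {poly F}) a n :
  pact (\sum_(i < k) G i) a n = \sum_(i < k) pact (G i) a n.
Proof.
exact: (big_morph (fun p => pact p a n) (fun p q => pactD p q a n) (pact0 a n)).
Qed.

Lemma pactXn j a n : pact 'X^j a n = a (n + j)%N.
Proof.
rewrite /pact size_polyXn big_ord_recr /= big1 => [|i _].
  by rewrite coefXn eqxx mul1r add0r.
by rewrite coefXn (ltn_eqF (ltn_ord i)) mul0r.
Qed.

Lemma pact1 a n : pact 1 a n = a n.
Proof. by rewrite -(expr0 'X) pactXn addn0. Qed.

Lemma pactXnB1 m a n : pact ('X^m - 1) a n = a (n + m)%N - a n.
Proof. by rewrite pactB pactXn pact1. Qed.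

Lemma eq_pact p a b n : a =1 b -> pact p a n = pact p b n.
Proof. by move=> eq_ab; apply: eq_bigr => i _; rewrite eq_ab. Qed.

Lemma pactXM q a n : pact ('X * q) a n = pact q a n.+1.
Proof.
rewrite (@pact_widen (size q).+1); last first.
  by apply: leq_trans (size_polyMleq _ _) _; rewrite size_polyX.
rewrite big_ord_recl coefXM eqxx mul0r add0r /pact.
by apply: eq_bigr => i _; rewrite coefXM /= addnS addSn.
Qed.

Lemma pactM p q a n : pact (p * q) a n = pact p (pact q a) n.
Proof.
elim/poly_ind: p q a n => [|p c IHp] q a n; first by rewrite mul0r !pact0.
rewrite mulrDl -mulrA pactD IHp mul_polyC pactZ pactD (mulrC p) pactXM.
rewrite -[c%:P]mulr1 mul_polyC pactZ pact1; congr (_ + _).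
by apply: eq_bigr => i _; rewrite pactXM addSn.
Qed.

Lemma annihilates_dvdp g p a : annihilates g a -> g %| p -> annihilates p a.
Proof.
move=> ann_g /divpK <- n; rewrite pactM (eq_pact _ _ ann_g).
by apply: big1 => i _; rewrite mulr0.
Qed.

Lemma annihilates_gcdp p q a :
  annihilates p a -> annihilates q a -> annihilates (gcdp p q) a.
Proof.
move=> ann_p ann_q; set e := egcdp p q.
apply: (@annihilates_dvdp (e.1 * p + e.2 * q)) => [n|].
  rewrite pactD !pactM (eq_pact _ _ ann_p) (eq_pact _ _ ann_q).
  by rewrite /pact !big1 ?addr0 // => i _; rewrite mulr0.
by rewrite -(eqp_dvdl _ (egcdpE p q)) dvdpp.
Qed.

Lemma periodicE m a : (forall n, a (n + m)%N = a n) <-> annihilates ('X^m - 1) a.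
Proof.
split=> [per n | ann n]; first by rewrite pactXnB1 per subrr.
by apply/eqP; rewrite -subr_eq0 -pactXnB1 ann.
Qed.

End PolyAction.

Lemma coprimep_X (F : fieldType) (g : {poly F}) : coprimep g 'X = ~~ root g 0.
Proof. by rewrite -coprimep_XsubC polyC0 subr0. Qed.

Lemma satisfies_rec_annihilator (F : fieldType) k (a : nat -> F) :
  satisfies_rec k a -> exists2 h : {poly F}, size h = k.+1 & annihilates h a.
Proof.
(* c_0 != 0 only serves to make a periodic. *)
case=> c [_ rec_a]; exists ('X^k - \sum_(i < k) c i *: 'X^i).
  rewrite size_polyDl ?size_polyXn // size_polyN.
  apply: leq_ltn_trans (size_sum _ _ _) _; rewrite ltnS.
  apply/bigmax_leqP => i _; apply: leq_trans (size_scale_leq _ _) _.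
  by rewrite size_polyXn.
move=> n; rewrite pactB pactXn pact_sum rec_a; apply/eqP; rewrite subr_eq0.
by apply/eqP/eq_bigr => i _; rewrite pactZ pactXn.
Qed.

Lemma annihilator_satisfies_rec (F : fieldType) k (a : nat -> F) (h : {poly F}) :
  size h = k.+1 -> h`_0 != 0 -> annihilates h a -> satisfies_rec k a.
Proof.
move=> size_h h0_neq0 ann_h.
have hk_neq0 : h`_k != 0.
  by rewrite -[k]/(k.+1.-1) -size_h -lead_coefE lead_coef_eq0 -size_poly_gt0 size_h.
exists (fun i : 'I_k => - h`_i / h`_k); split=> [i /= -> | n].
  by rewrite mulf_neq0 ?oppr_eq0 ?invr_eq0.
have := ann_h n; rewrite /pact size_h big_ord_recr /= => /eqP.
rewrite addrC addr_eq0 => /eqP hk_a.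
apply: (mulfI hk_neq0); rewrite hk_a mulr_sumr -sumrN.
by apply: eq_bigr => i _; field.
Qed.

Lemma Oset_of_least_divisor (F : fieldType) k m (g : {poly F}) :
  g != 0 -> (size g <= k.+1)%N -> (0 < m)%N -> g %| 'X^m - 1 ->
  (forall m', (0 < m')%N -> g %| 'X^m' - 1 -> (m <= m')%N) -> Oset F k m.
Proof.
move=> g_neq0 size_g m_gt0 g_dvd min_m.
have cop_g : coprimep g 'X.
  rewrite coprimep_X; apply/negP => /(root_dvdp g_dvd).
  by rewrite /root !hornerE expr0n gtn_eqF // sub0r oppr_eq0 oner_eq0.
exists ('X^(k.+1 - size g) * g); split; first by rewrite mulrC size_mulXn // subnK.
split; first by rewrite mulf_neq0 // -size_poly_gt0 size_polyXn.
by exists (k.+1 - size g)%N, g.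
Qed.

Lemma Pset_sub_Oset (F : fieldType) k m : Pset F k m -> Oset F k m.
Proof.
case=> a [rec_a [m_gt0 [per_m min_m]]].
have [h size_h ann_h] := satisfies_rec_annihilator rec_a.
have h_neq0 : h != 0 by rewrite -size_poly_gt0 size_h.
pose g := gcdp h ('X^m - 1).
have ann_g : annihilates g a by apply: annihilates_gcdp => //; apply/periodicE.
apply: (@Oset_of_least_divisor _ _ _ g) => //.
- by rewrite gcdp_eq0 negb_and h_neq0.
- by rewrite -size_h dvdp_leq ?dvdp_gcdl.
- exact: dvdp_gcdr.
move=> m' m'_gt0 g_dvd; apply: min_m => //.
by apply/periodicE; apply: annihilates_dvdp g_dvd.
Qed.

Lemma size_XnM_leq (R : nzRingType) (u : {poly R}) d :
  (size u <= d)%N -> (size ('X^(d - size u) * u)%R <= d)%N.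
Proof.
have [-> | u_neq0 size_u] := eqVneq u 0; first by rewrite mulr0 size_poly0.
by rewrite -commr_polyXn size_mulXn // subnK.
Qed.

Lemma coef_XnM_lead (R : nzRingType) (u : {poly R}) d :
  (size u <= d)%N -> ('X^(d - size u) * u)`_d.-1 = lead_coef u.
Proof.
have [-> | u_neq0 size_u] := eqVneq u 0; first by rewrite mulr0 coef0 lead_coef0.
have u_gt0 : (0 < size u)%N by rewrite size_poly_gt0.
rewrite coefXnM lead_coefE ifF; last by move: u_gt0 size_u; lia.
by congr _`_ _; move: u_gt0 size_u; lia.
Qed.

Section RemainderSequence.
Variables (F : fieldType) (g : {poly F}).
Hypothesis g_neq0 : g != 0.

Definition top_rem (p : {poly F}) : F := (p %% g)`_(size g).-2.

Definition rem_seq (n : nat) : F := top_rem 'X^n.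

Lemma pact_rem_seq p n : pact p rem_seq n = top_rem ('X^n * p).
Proof.
have top_remD q r : top_rem (q + r) = top_rem q + top_rem r.
  by rewrite /top_rem modpD coefD.
have top_rem0 : top_rem 0 = 0 by rewrite /top_rem mod0p coef0.
rewrite -{2}(coefK p) poly_def mulr_sumr (big_morph top_rem top_remD top_rem0).
by apply: eq_bigr => i _; rewrite -scalerAr -exprD /top_rem modpZl coefZ.
Qed.

Lemma annihilates_rem_seqE p : annihilates p rem_seq <-> g %| p.
Proof.
split=> [ann_p | g_dvd n]; last first.
  by rewrite pact_rem_seq /top_rem modp_eq0 ?coef0 // dvdp_mull.
have size_u : (size (p %% g)%R <= (size g).-1)%N.
  by rewrite -ltnS prednK ?ltn_modp ?size_poly_gt0.
have := ann_p ((size g).-1 - size (p %% g)%R)%N.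
rewrite pact_rem_seq /top_rem -modp_mul modp_small; last first.
  by rewrite -[X in (_ < X)%N]prednK ?size_poly_gt0 // ltnS size_XnM_leq.
by rewrite coef_XnM_lead // => /eqP; rewrite lead_coef_eq0 => /eqP/modp_eq0P.
Qed.

End RemainderSequence.

Lemma Oset_sub_Pset (F : fieldType) k m : Oset F k m -> Pset F k m.
Proof.
case=> f [size_f [f_neq0 [r [g [fE [cop_g [m_gt0 [g_dvd min_m]]]]]]]]; subst f.
have g_neq0 : g != 0 by apply: contraNneq f_neq0 => ->; rewrite mulr0.
have periodE m' : (forall n, rem_seq g (n + m')%N = rem_seq g n) <-> g %| 'X^m' - 1.
  by rewrite periodicE annihilates_rem_seqE.
exists (rem_seq g); split; last first.
  by do !split=> //; [apply/periodE | move=> m' m'_gt0 /periodE; apply: min_m].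
(* multiplying by (X - 1)^r restores degree k without creating a root at 0 *)
apply: (@annihilator_satisfies_rec _ _ _ (g * ('X - 1%:P) ^+ r)).
- rewrite size_mul ?expf_neq0 ?polyXsubC_eq0 // size_exp_XsubC.
  by move: size_f; rewrite mulrC size_mulXn // addnS addnC => <-.
- rewrite -[_`_0]horner_coef0 hornerM horner_exp hornerXsubC mulf_neq0 -?coprimep_X //.
  by rewrite expf_neq0 // sub0r oppr_eq0 oner_eq0.
by apply/annihilates_rem_seqE => //; apply: dvdp_mulIl.
Qed.

Theorem lemma3p2 (F : finFieldType) (k : nat) (hk : (1 <= k)%N) :
  forall m : nat, Pset F k m <-> Oset F k m.
Proof. by move=> m; split; [apply: Pset_sub_Oset | apply: Oset_sub_Pset]. Qed.
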